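(* Let $\mathbb{P}\in\triangle(\mathcal{X}\times[L])$ with marginal $\mathbb{P}_{\rm x}$ and Bayes class-posterior $\eta^\star$, let $h,h^{(\mathrm{e})}\colon\mathcal{X}\to\mathbb{R}^L$, $s\colon\mathcal{X}\to\mathbb{R}$, and $\gamma,\gamma^{(\mathrm{e})}>0$. Suppose $0\le\ell\le B$ and the partial losses satisfy $\phi_{+1}\ge0$, $\phi_{-1}\ge0$. Then $$\frac{e^{-B/\gamma}}{2\gamma^2}\mathbb{E}_{\mathbb{P}_{\rm x}}\!\big[\phi_{+1}(s(\mathsf{X}))V(\mathsf{X})\big]+\frac{e^{-B/\gamma^{(\mathrm{e})}}}{2(\gamma^{(\mathrm{e})})^2}\mathbb{E}_{\mathbb{P}_{\rm x}}\!\big[\phi_{-1}(s(\mathsf{X}))V^{(\mathrm{e})}(\mathsf{X})\big]\le \mathcal{L}_{\mathtt{J}}(s;\gamma,\gamma^{(\mathrm{e})})-\mathcal{L}_{\mathtt{M}}(s;\gamma,\gamma^{(\mathrm{e})})$$ $$\le\frac{1}{2\gamma^2}\mathbb{E}_{\mathbb{P}_{\rm x}}\!\big[\phi_{+1}(s(\mathsf{X}))V(\mathsf{X})\big]+\frac{1}{2(\gamma^{(\mathrm{e})})^2}\mathbb{E}_{\mathbb{P}_{\rm x}}\!\big[\phi_{-1}(s(\mathsf{X}))V^{(\mathrm{e})}(\mathsf{X})\big],$$ where $V(x)=\mathrm{Var}_{\mathsf{Y}\sim\eta^\star(x)}[\ell(x,\mathsf{Y},h(x))]$ and $V^{(\m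athrm{e})}(x)=\mathrm{Var}_{\mathsf{Y}\sim\eta^\star(x)}[\ell(x,\mathsf{Y},h^{(\mathrm{e})}(x))]$.
   Context: For $\mathtt{I}\in\{\mathtt{M},\mathtt{J}\}$, $\mathcal{L}_{\mathtt{I}}(s;\gamma,\gamma^{(\mathrm{e})})=\mathbb{E}_{\mathsf{X}\sim\mathbb{P}_{\rm x}}[\tilde w_{\mathtt{I}}(\mathsf{X};\gamma)\,\phi_{+1}(s(\mathsf{X}))+\tilde w^{(\mathrm{e})}_{\mathtt{I}}(\mathsf{X};\gamma^{(\mathrm{e})})\,\phi_{-1}(s(\mathsf{X}))]$, where $\tilde w_{\mathtt{M}}(x;\gamma)=\exp(-\mathbb{E}_{\mathsf{Y}\sim\eta^\star(x)}[\ell(x,\mathsf{Y},h(x))]/\gamma)$, $\tilde w_{\mathtt{J}}(x;\gamma)=\mathbb{E}_{\mathsf{Y}\sim\eta^\star(x)}[\exp(-\ell(x,\mathsf{Y},h(x))/\gamma)]$, and $\tilde w^{(\mathrm{e})}_{\mathtt{I}}$ is defined identically with $h$ replaced by $h^{(\mathrm{e})}$. Here $\ell\colon\mathcal{X}\times[L]\times\mathbb{R}^L\to\mathbb{R}$ is a loss and $\phi_{\pm1}\colon\mathbb{R}\to\mathbb{R}$ are partial losses of a binary loss. *)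

From HB Require Import structures.
From mathcomp Require Import all_boot all_order all_algebra.
From mathcomp Require Import all_classical all_reals all_analysis.
Set Implicit Arguments. Unset Strict Implicit. Unset Printing Implicit Defensive.
Import Order.TTheory GRing.Theory Num.Theory.
Local Open Scope ring_scope.

Section Defs.
Context {T : Type} {R : realType} {L : nat}.

Definition cexp (eta : T -> 'I_L -> R) (x : T) (f : 'I_L -> R) : R :=
  \sum_(y < L) eta x y * f y.

Definition cvar (eta : T -> 'I_L -> R) (x : T) (f : 'I_L -> R) : R :=
  cexp eta x (fun y => (f y - cexp eta x f) ^+ 2).

Definition wM (eta : T -> 'I_L -> R) (ell : T -> 'I_L -> 'rV[R]_L -> R)
  (h : T -> 'rV[R]_L) (gamma : R) (x : T) : R :=
  expR (- cexp eta x (fun y => ell x y (h x)) / gamma).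

Definition wJ (eta : T -> 'I_L -> R) (ell : T -> 'I_L -> 'rV[R]_L -> R)
  (h : T -> 'rV[R]_L) (gamma : R) (x : T) : R :=
  cexp eta x (fun y => expR (- ell x y (h x) / gamma)).
End Defs.

(* L_I(s; gamma, gamma_e) for weight constructor w (= wM or wJ) *)
Definition LossI {d : measure_display} {T : measurableType d} {R : realType}
  {L : nat} (P : probability T R)
  (w : (T -> 'I_L -> R) -> (T -> 'I_L -> 'rV[R]_L -> R) -> (T -> 'rV[R]_L) -> R -> T -> R)
  (eta : T -> 'I_L -> R) (ell : T -> 'I_L -> 'rV[R]_L -> R)
  (h he : T -> 'rV[R]_L) (phip phim : R -> R) (s : T -> R) (gamma gammae : R) : R :=
  Rintegral P setT (fun x => w eta ell h gamma x * phip (s x)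
                            + w eta ell he gammae x * phim (s x)).

From HB Require Import structures.
From mathcomp Require Import all_boot all_order all_algebra.
From mathcomp Require Import all_classical all_reals all_analysis.
From mathcomp Require Import measurable_realfun ring lra.
Import Order.TTheory GRing.Theory Num.Theory numFieldNormedType.Exports.
Local Open Scope ring_scope.
Set Implicit Arguments. Unset Strict Implicit.

(* Pointwise, w_J - w_M is the Jensen gap E[e^U] - e^(E U) of the exponential at
   U = -ell/gamma, which takes values in [-B/gamma, 0].  Writing the gap as the
   average of the Bregman terms e^u - e^m - (u - m) e^m and bounding each by
   Taylor's theorem, e^xi (u - m)^2 / 2 with xi in [-B/gamma, 0], puts it between
   e^(-B/gamma) Var(U)/2 and Var(U)/2, and Var(U) = V / gamma^2.  Integrating
   against phi(s) >= 0 gives the two-sided bound. *)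

Section expR_taylor.
Context {R : realType}.

Lemma ger0_is_derive_ndecr (f df : R -> R) :
  (forall x : R, is_derive x (1 : R) f (df x)) -> (forall x, 0 <= df x) ->
  {homo f : x y / x <= y}.
Proof.
move=> fd df_ge0 x y xy.
have cf : {within `[x, y], continuous f}%classic.
  apply: continuous_subspaceT => z.
  by apply: differentiable_continuous; apply/derivable1_diffP; exact: ex_derive.
have [c _ fxy] := MVT_segment xy (fun z _ => fd z) cf.
by rewrite -subr_ge0 fxy mulr_ge0 // subr_ge0.
Qed.

Lemma expR_sub1_sqr_ndecr :
  {homo (fun a : R => expR a - 1 - a - a ^+ 2 / 2) : a b / a <= b}.
Proof.
apply: (@ger0_is_derive_ndecr _ (fun a => expR a - 1 - a)); last first.
  by move=> a; have := expR_ge1Dx a; lra.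
move=> a; apply: is_derive_eq.
by rewrite /GRing.scale /=; field.
Qed.

(* 1 - e^b (1 - b) = e^b (e^(-b) - 1 - (-b)), the first-order remainder of exp
   at -b rescaled by e^b; this yields the e^a-weighted half of the Taylor bounds. *)
Lemma expR_rem_sqr_ndecr :
  {homo (fun b : R => 1 - expR b * (1 - b) - b ^+ 2 / 2) : a b / a <= b}.
Proof.
apply: (@ger0_is_derive_ndecr _ (fun b => b * (expR b - 1))); last first.
  move=> b; have [b0|b0] := leP 0 b.
    by rewrite mulr_ge0 // subr_ge0; have := expR_ge1Dx b; lra.
  by apply: mulr_le0; rewrite ?subr_le0 ?expR_le1 ltW.
move=> b; apply: is_derive_eq.
by rewrite /GRing.scale /=; field.
Qed.

Lemma expR_taylor1_ge0 (a : R) : 0 <= a ->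
  a ^+ 2 / 2 <= expR a - 1 - a <= expR a * (a ^+ 2 / 2).
Proof.
move=> a_ge0; apply/andP; split.
  by have := @expR_sub1_sqr_ndecr 0 a a_ge0; rewrite expR0 expr0n /=; lra.
have := @expR_rem_sqr_ndecr (- a) 0; rewrite oppr_le0 => /(_ a_ge0).
rewrite expR0 expr0n sqrrN opprK /= => rem_le.
have := expRxMexpNx_1 a; have := expR_gt0 a; nra.
Qed.

Lemma expR_taylor1_le0 (a : R) : a <= 0 ->
  expR a * (a ^+ 2 / 2) <= expR a - 1 - a <= a ^+ 2 / 2.
Proof.
move=> a_le0; apply/andP; split; last first.
  by have := @expR_sub1_sqr_ndecr a 0 a_le0; rewrite expR0 expr0n /=; lra.
have := @expR_rem_sqr_ndecr 0 (- a); rewrite oppr_ge0 => /(_ a_le0).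
rewrite expR0 expr0n sqrrN opprK /= => rem_ge.
have := expRxMexpNx_1 a; have := expR_gt0 a; nra.
Qed.

Lemma expR_bregman_bounds (c e u v : R) : c <= u <= e -> c <= v <= e ->
  expR c * ((u - v) ^+ 2 / 2) <= expR u - expR v - (u - v) * expR v
    <= expR e * ((u - v) ^+ 2 / 2).
Proof.
move=> /andP[cu ue] /andP[cv ve].
have -> : expR u - expR v - (u - v) * expR v = expR v * (expR (u - v) - 1 - (u - v)).
  by rewrite expRB; field; rewrite gt_eqF ?expR_gt0.
have expRu : expR v * expR (u - v) = expR u by rewrite -expRD addrC subrK.
have sqr_ge0 : 0 <= (u - v) ^+ 2 / 2 by rewrite divr_ge0 ?sqr_ge0.
have [ecu eue ecv eve] : [/\ expR c <= expR u, expR u <= expR e,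
  expR c <= expR v & expR v <= expR e] by rewrite !ler_expR.
have expRv_ge0 := expR_ge0 v.
have [vu|uv] := leP v u.
  have /andP[lo hi] : (u - v) ^+ 2 / 2 <= expR (u - v) - 1 - (u - v)
      <= expR (u - v) * ((u - v) ^+ 2 / 2) by rewrite expR_taylor1_ge0 ?subr_ge0.
  apply/andP; split; first by nra.
  by move: expRu; nra.
have /andP[lo hi] : expR (u - v) * ((u - v) ^+ 2 / 2) <= expR (u - v) - 1 - (u - v)
    <= (u - v) ^+ 2 / 2 by rewrite expR_taylor1_le0 // subr_le0 ltW.
apply/andP; split; last by nra.
by move: expRu; nra.
Qed.

End expR_taylor.

Section conditional_moments.
Context {R : realType} {T : Type} {L : nat}.
Variables (eta : T -> 'I_L -> R) (x : T).
Hypothesis eta_ge0 : forall y, 0 <= eta x y.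
Hypothesis eta_sum1 : \sum_(y < L) eta x y = 1.

Lemma cexpZ (k : R) (f : 'I_L -> R) :
  cexp eta x (fun y => k * f y) = k * cexp eta x f.
Proof. by rewrite /cexp mulr_sumr; apply: eq_bigr => y _; rewrite mulrCA. Qed.

Lemma cexpB (f g : 'I_L -> R) :
  cexp eta x (fun y => f y - g y) = cexp eta x f - cexp eta x g.
Proof. by rewrite /cexp -sumrB; apply: eq_bigr => y _; rewrite mulrBr. Qed.

Lemma cexp_cst (c : R) : cexp eta x (fun=> c) = c.
Proof. by rewrite /cexp -mulr_suml eta_sum1 mul1r. Qed.

Lemma ler_cexp (f g : 'I_L -> R) :
  (forall y, f y <= g y) -> cexp eta x f <= cexp eta x g.
Proof. by move=> fg; apply: ler_sum => y _; rewrite ler_wpM2l. Qed.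

Lemma cexp_ge0 (f : 'I_L -> R) : (forall y, 0 <= f y) -> 0 <= cexp eta x f.
Proof. by move=> f_ge0; apply: sumr_ge0 => y _; rewrite mulr_ge0. Qed.

Lemma cexp_bounds (lo hi : R) (f : 'I_L -> R) :
  (forall y, lo <= f y <= hi) -> lo <= cexp eta x f <= hi.
Proof.
move=> f_bnd; rewrite -[X in X <= _ <= _]cexp_cst -[X in _ <= _ <= X]cexp_cst.
by apply/andP; split; apply: ler_cexp => y; case/andP: (f_bnd y).
Qed.

Lemma cvarZ (k : R) (f : 'I_L -> R) :
  cvar eta x (fun y => k * f y) = k ^+ 2 * cvar eta x f.
Proof.
rewrite /cvar cexpZ -[RHS]cexpZ /cexp; apply: eq_bigr => y _.
by rewrite -mulrBr exprMn.
Qed.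

Lemma cvar_bounds (lo hi : R) (f : 'I_L -> R) :
  (forall y, lo <= f y <= hi) -> 0 <= cvar eta x f <= (hi - lo) ^+ 2.
Proof.
move=> f_bnd; have /andP[lo_m m_hi] := cexp_bounds f_bnd.
apply: cexp_bounds => y; have /andP[lo_f f_hi] := f_bnd y.
by rewrite sqr_ge0 /=; nra.
Qed.

Lemma cexp_expR_jensen_gap (c e : R) (U : 'I_L -> R) :
  (forall y, c <= U y <= e) ->
  expR c / 2 * cvar eta x U
    <= cexp eta x (fun y => expR (U y)) - expR (cexp eta x U)
    <= expR e / 2 * cvar eta x U.
Proof.
move=> U_bnd; set m := cexp eta x U.
have cme : c <= m <= e by exact: cexp_bounds.
have -> : cexp eta x (fun y => expR (U y)) - expR m =
    cexp eta x (fun y => expR (U y) - expR m - expR m * (U y - m)).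
  by rewrite !cexpB cexp_cst cexpZ cexpB cexp_cst subrr mulr0 subr0.
rewrite /cvar -/m -!cexpZ; apply/andP; split; apply: ler_cexp => y;
  have /andP[lo hi] := expR_bregman_bounds (U_bnd y) cme; lra.
Qed.

Lemma wJ_sub_wM_bounds (ell : T -> 'I_L -> 'rV[R]_L -> R) (k : T -> 'rV[R]_L)
    (g B : R) :
  0 < g -> (forall y, 0 <= ell x y (k x) <= B) ->
  expR (- B / g) / (2 * g ^+ 2) * cvar eta x (fun y => ell x y (k x))
    <= wJ eta ell k g x - wM eta ell k g x
    <= 1 / (2 * g ^+ 2) * cvar eta x (fun y => ell x y (k x)).
Proof.
move=> g_gt0 ell_bnd; set V := cvar eta x _.
have U_E : (fun y => - ell x y (k x) / g) = (fun y => - g^-1 * ell x y (k x)).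
  by apply/funext => y; rewrite mulrC mulrN mulNr.
have meanE : cexp eta x (fun y => - ell x y (k x) / g)
    = - cexp eta x (fun y => ell x y (k x)) / g.
  by rewrite U_E cexpZ mulrC mulrN mulNr.
have varE : cvar eta x (fun y => - ell x y (k x) / g) = g ^- 2 * V.
  by rewrite U_E cvarZ sqrrN exprVn.
have U_bnd y : - B / g <= - ell x y (k x) / g <= 0.
  have /andP[ell_ge0 ell_leB] := ell_bnd y.
  by rewrite !mulNr lerN2 oppr_le0 ler_pM2r ?invr_gt0 // ell_leB divr_ge0 // ltW.
have coefE a : a / (2 * g ^+ 2) * V = a / 2 * (g ^- 2 * V).
  by field; rewrite gt_eqF.
have := cexp_expR_jensen_gap U_bnd.
by rewrite meanE varE expR0 !coefE.
Qed.

Lemma wJ_bounds (ell : T -> 'I_L -> 'rV[R]_L -> R) (k : T -> 'rV[R]_L) (g : R) :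
  0 < g -> (forall y, 0 <= ell x y (k x)) -> 0 <= wJ eta ell k g x <= 1.
Proof.
move=> g_gt0 ell_ge0; apply: cexp_bounds => y.
by rewrite expR_ge0 expR_le1 mulNr oppr_le0 divr_ge0 ?(ltW g_gt0).
Qed.

Lemma wM_bounds (ell : T -> 'I_L -> 'rV[R]_L -> R) (k : T -> 'rV[R]_L) (g : R) :
  0 < g -> (forall y, 0 <= ell x y (k x)) -> 0 <= wM eta ell k g x <= 1.
Proof.
move=> g_gt0 ell_ge0.
by rewrite expR_ge0 expR_le1 mulNr oppr_le0 divr_ge0 ?(ltW g_gt0) ?cexp_ge0.
Qed.

End conditional_moments.

Lemma bounded_normr_le (T : Type) (R : realFieldType) (g : T -> R) (M : R) :
  (forall x, `|g x| <= M) -> [bounded g x | x in setT].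
Proof.
move=> gM; rewrite /bounded_near; near=> M0 => x _ /=; apply: le_trans (gM x) _.
by near: M0; apply: nbhs_pinfty_ge; exact: num_real.
Unshelve. all: by end_near. Qed.

Section weight_integrals.
Context d (X : measurableType d) (R : realType) (P : probability X R) (L : nat).
Variables (eta : X -> 'I_L -> R) (ell : X -> 'I_L -> 'rV[R]_L -> R).
Variables (k : X -> 'rV[R]_L) (g B : R) (phi : X -> R).
Hypothesis eta_ge0 : forall x y, 0 <= eta x y.
Hypothesis eta_sum1 : forall x, \sum_(y < L) eta x y = 1.
Hypothesis eta_meas : forall y, measurable_fun setT (fun x => eta x y).
Hypothesis ell_meas : forall y, measurable_fun setT (fun x => ell x y (k x)).
Hypothesis ell_bnd : forall x y, 0 <= ell x y (k x) <= B.
Hypothesis g_gt0 : 0 < g.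
Hypothesis phi_ge0 : forall x, 0 <= phi x.
Hypothesis phi_int : P.-integrable setT (EFin \o phi).

Lemma measurable_cexp (f : X -> 'I_L -> R) :
  (forall y, measurable_fun setT (fun x => f x y)) ->
  measurable_fun setT (fun x => cexp eta x (f x)).
Proof. by move=> f_meas; apply: measurable_sum => y; exact: measurable_funM. Qed.

Let measurable_cexp_ell :
  measurable_fun setT (fun x => cexp eta x (fun y => ell x y (k x))).
Proof. exact: (measurable_cexp (f := fun x y => ell x y (k x))). Qed.

Lemma measurable_cvar :
  measurable_fun setT (fun x => cvar eta x (fun y => ell x y (k x))).
Proof.
apply: (measurable_cexp
  (f := fun x y => (ell x y (k x) - cexp eta x (fun y => ell x y (k x))) ^+ 2)).
by move=> y; apply/measurable_funX/measurable_funB.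
Qed.

Lemma measurable_wJ : measurable_fun setT (wJ eta ell k g).
Proof.
apply: (measurable_cexp (f := fun x y => expR (- ell x y (k x) / g))) => y.
by apply/measurableT_comp/measurable_funM/measurable_cst/measurable_funN.
Qed.

Lemma measurable_wM : measurable_fun setT (wM eta ell k g).
Proof.
by apply/measurableT_comp/measurable_funM/measurable_cst/measurable_funN.
Qed.

Let ell_ge0 x y : 0 <= ell x y (k x).
Proof. by case/andP: (ell_bnd x y). Qed.

Lemma integrable_wJ_mul :
  P.-integrable setT (EFin \o (fun x => wJ eta ell k g x * phi x)).
Proof.
apply: (integrableMr measurableT measurable_wJ (bounded_normr_le (M := 1) _) phi_int).
move=> x; have /andP[wJ_ge0 wJ_le1] : 0 <= wJ eta ell k g x <= 1 by apply: wJ_bounds.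
by rewrite ger0_norm.
Qed.

Lemma integrable_wM_mul :
  P.-integrable setT (EFin \o (fun x => wM eta ell k g x * phi x)).
Proof.
apply: (integrableMr measurableT measurable_wM (bounded_normr_le (M := 1) _) phi_int).
move=> x; have /andP[wM_ge0 wM_le1] : 0 <= wM eta ell k g x <= 1 by apply: wM_bounds.
by rewrite ger0_norm.
Qed.

Lemma integrable_mul_cvar :
  P.-integrable setT (EFin \o (fun x => phi x * cvar eta x (fun y => ell x y (k x)))).
Proof.
apply: (integrableMl measurableT phi_int measurable_cvar
  (bounded_normr_le (M := B ^+ 2) _)).
move=> x; have /andP[V_ge0 V_le] :
  0 <= cvar eta x (fun y => ell x y (k x)) <= (B - 0) ^+ 2 by exact: cvar_bounds.
by rewrite ger0_norm // -[B]subr0.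
Qed.

Lemma Rintegral_wJ_sub_wM_bounds :
  let E := Rintegral P setT (fun x => phi x * cvar eta x (fun y => ell x y (k x))) in
  expR (- B / g) / (2 * g ^+ 2) * E
    <= Rintegral P setT (fun x => wJ eta ell k g x * phi x)
       - Rintegral P setT (fun x => wM eta ell k g x * phi x) /\
  Rintegral P setT (fun x => wJ eta ell k g x * phi x)
    - Rintegral P setT (fun x => wM eta ell k g x * phi x) <= 1 / (2 * g ^+ 2) * E.
Proof.
move=> E; rewrite /E -RintegralB ?integrable_wJ_mul ?integrable_wM_mul //.
rewrite -!RintegralZl ?integrable_mul_cvar //.
have int_gap := integrableB measurableT integrable_wJ_mul integrable_wM_mul.
have int_bound c := integrableZl measurableT c integrable_mul_cvar.
have gap_bounds x := wJ_sub_wM_bounds (eta := eta) (ell := ell) (k := k)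
  (eta_ge0 x) (eta_sum1 x) g_gt0 (ell_bnd x).
split; apply: le_Rintegral => //; try exact: int_bound; move=> x _;
  rewrite -mulrBl mulrCA [_ * phi x]mulrC ler_wpM2l //; by case/andP: (gap_bounds x).
Qed.

End weight_integrals.

Theorem theorem4 (d : measure_display) (X : measurableType d) (R : realType)
  (L : nat) (P : probability X R) (eta : X -> 'I_L -> R)
  (ell : X -> 'I_L -> 'rV[R]_L -> R) (h he : X -> 'rV[R]_L) (s : X -> R)
  (phip phim : R -> R) (gamma gammae B : R) :
  (forall x y, 0 <= eta x y) ->
  (forall x, \sum_(y < L) eta x y = 1) ->
  (forall y, measurable_fun setT (fun x => eta x y)) ->
  (forall y, measurable_fun setT (fun x => ell x y (h x))) ->
  (forall y, measurable_fun setT (fun x => ell x y (he x))) ->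
  measurable_fun setT (phip \o s) ->
  measurable_fun setT (phim \o s) ->
  P.-integrable setT (EFin \o (phip \o s)) ->
  P.-integrable setT (EFin \o (phim \o s)) ->
  0 < gamma -> 0 < gammae ->
  (forall x y v, 0 <= ell x y v /\ ell x y v <= B) ->
  (forall t, 0 <= phip t) -> (forall t, 0 <= phim t) ->
  let V := fun x => cvar eta x (fun y => ell x y (h x)) in
  let Ve := fun x => cvar eta x (fun y => ell x y (he x)) in
  let Ep := Rintegral P setT (fun x => phip (s x) * V x) in
  let Em := Rintegral P setT (fun x => phim (s x) * Ve x) in
  let D := LossI P wJ eta ell h he phip phim s gamma gammae
           - LossI P wM eta ell h he phip phim s gamma gammae in
  expR (- B / gamma) / (2 * gamma ^+ 2) * Ep
    + expR (- B / gammae) / (2 * gammae ^+ 2) * Em <= D /\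
  D <= 1 / (2 * gamma ^+ 2) * Ep + 1 / (2 * gammae ^+ 2) * Em.
Proof.
move=> eta_ge0 eta_sum1 eta_meas ellh_meas ellhe_meas _ _ phip_int phim_int
  gamma_gt0 gammae_gt0 ell_bnd phip_ge0 phim_ge0 V Ve Ep Em D.
have ell_bnd_at k x y : 0 <= ell x y (k x) <= B.
  by case: (ell_bnd x y (k x)) => -> ->.
have phip_s_ge0 x : 0 <= (phip \o s) x by exact: phip_ge0.
have phim_s_ge0 x : 0 <= (phim \o s) x by exact: phim_ge0.
have [lo_h hi_h] := Rintegral_wJ_sub_wM_bounds eta_ge0 eta_sum1 eta_meas ellh_meas
  (ell_bnd_at h) gamma_gt0 phip_s_ge0 phip_int.
have [lo_he hi_he] := Rintegral_wJ_sub_wM_bounds eta_ge0 eta_sum1 eta_meas ellhe_meas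
  (ell_bnd_at he) gammae_gt0 phim_s_ge0 phim_int.
rewrite /D /LossI !RintegralD //;
  try solve [exact: integrable_wJ_mul | exact: integrable_wM_mul].
by rewrite opprD addrACA; split; exact: lerD.
Qed.
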